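(* Let $\Delta$ be a $d$-dimensional IP lattice simplex ($d\ge2$) of Gorenstein index $g$ with local Gorenstein indices $g_0,\dots,g_d$. Then, for a suitable ordering $v_0,\dots,v_d$ of its vertices, $\Delta\cong\Delta(P)$ for a matrix $P$ satisfying all hypotheses (i)–(iii) of the following construction with $A=A(\Delta)=(\alpha_0,\dots,\alpha_d)$, $\alpha_i=g|Q_\Delta|/q_i$: $P=[v_0\cdots v_d]$ is a $d\times(d+1)$ integer matrix, upper triangular in its first $d$ columns with entries $a_{ik}$ ($a_{ik}=0$ for $i>k$) and last column $(-b_1,\dots,-b_d)^T$, such that for all $k$: (i) $a_{kk}\ge1$ and $a_{kk}\mid\alpha_{k-1}$; (ii) $0\le a_{ik}<a_{kk}$ for $i<k$; (iii) $b_kw_d=a_{kk}w_{k-1}+\dots+a_{kd}w_{d-1}$, where $w_i=\mathrm{lcm}(\alpha_0,\dots,\alpha_d)/\alpha_i$.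
   Context: An IP lattice simplex is a full-dimensional simplex in $\mathbb{Q}^d$ with vertices in $\mathbb{Z}^d$ containing the origin in its interior. $\cong$ means equality up to $\mathrm{GL}(d,\mathbb{Z})$; $\Delta(P)$ is the convex hull of the columns of $P$. Weight system $Q_\Delta=(q_0,\dots,q_d)$, $q_i=|\det(v_j:j\ne i)|$, $|Q_\Delta|=\sum q_i$. Dual $\Delta^*=\{u:\langle u,v\rangle\ge-1\ \forall v\in\Delta\}$; the $k$-th local Gorenstein index is the least $g_k\ge1$ with $g_ku_k\in\mathbb{Z}^d$ for the vertex $u_k$ of $\Delta^*$ with $\langle u_k,v_j\rangle=-1$ ($j\ne k$); the Gorenstein index is $\mathrm{lcm}(g_0,\dots,g_d)$. The tuple $A(\Delta)$ consists of positive integers with $\sum1/\alpha_i=1/g$. *)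

From HB Require Import structures.
From mathcomp Require Import all_boot all_order fingroup perm all_algebra.
Set Implicit Arguments. Unset Strict Implicit. Unset Printing Implicit Defensive.
Import Order.TTheory GRing.Theory Num.Theory.
Local Open Scope ring_scope.

(* A simplex in Q^d is given by the d x (d+1) integer matrix V whose columns
   are its vertices v_0, ..., v_d (in this order). *)
Definition ratM (m n : nat) (V : 'M[int]_(m, n)) : 'M[rat]_(m, n) :=
  map_mx (fun z : int => z%:~R) V.

(* IP lattice simplex: full-dimensional (columns affinely independent) and
   the origin in the interior (a convex combination of the vertices with all
   coefficients strictly positive). *)
Definition IP_simplex (d : nat) (V : 'M[int]_(d, d.+1)) : Prop :=
  (\rank (col_mx (const_mx (1 : rat) : 'M[rat]_(1, d.+1)) (ratM V)) = d.+1)%N /\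
  exists lam : 'cV[rat]_(d.+1),
    (forall j, 0 < lam j 0) /\ \sum_j lam j 0 = 1 /\ ratM V *m lam = 0.

Definition weight (d : nat) (V : 'M[int]_(d, d.+1)) (i : 'I_d.+1) : nat :=
  `|\det (col' i V)|%N.

Definition Qsum (d : nat) (V : 'M[int]_(d, d.+1)) : nat :=
  (\sum_i weight V i)%N.

(* the vertex u_k of the dual: <u_k, v_j> = -1 for all j <> k *)
Definition dual_vertex (d : nat) (V : 'M[int]_(d, d.+1)) (k : 'I_d.+1)
  : 'cV[rat]_d :=
  invmx ((col' k (ratM V))^T) *m const_mx (-1).

Definition int_vec (d : nat) (u : 'cV[rat]_d) : Prop :=
  forall i, u i 0 \is a Num.int.

Definition is_local_gor (d : nat) (V : 'M[int]_(d, d.+1)) (k : 'I_d.+1)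
  (gk : nat) : Prop :=
  (0 < gk)%N /\ int_vec (gk%:R *: dual_vertex V k) /\
  forall n : nat, (0 < n)%N -> int_vec (n%:R *: dual_vertex V k) -> (gk <= n)%N.

(* alpha_i = g |Q_Delta| / q_i  (an integer, see the paper) *)
Definition alpha (d : nat) (V : 'M[int]_(d, d.+1)) (g : nat) (i : 'I_d.+1)
  : nat := ((g * Qsum V) %/ weight V i)%N.

(* Hypotheses (i)-(iii) of the construction, for P = [v_0 ... v_d] with
   0-based indices: rows i : 'I_d (row i+1 of the paper), columns
   j : 'I_(d+1) (column j+1 of the paper, i.e. vertex v_j);
   a_{i+1,k+1} = P i k for k < d, and b_{i+1} = - P i d. *)
Definition construction_hyps (d : nat) (A : 'I_d.+1 -> nat)
  (P : 'M[int]_(d, d.+1)) : Prop :=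
  let col := fun k : 'I_d => widen_ord (leqnSn d) k in
  let w := fun i : 'I_d.+1 => ((\big[lcmn/1%N]_(j < d.+1) A j) %/ A i)%N in
  (forall i k : 'I_d, (k < i)%N -> P i (col k) = 0) /\
  (forall k : 'I_d, 1 <= P k (col k) /\ (P k (col k) %| (A (col k))%:Z)%Z) /\
  (forall i k : 'I_d, (i < k)%N -> 0 <= P i (col k) < P k (col k)) /\
  (forall k : 'I_d,
     (- P k ord_max) * (w ord_max)%:Z =
     \sum_(j < d | (k <= j)%N) P k (col j) * (w (col j))%:Z).

(* The weights q_j = |det(v_i : i <> j)| are, by Cramer's rule, proportional
   to the positive barycentric coordinates of the origin, so
   sum_j q_j v_j = 0.  Clearing the denominators of the dual vertex u_k by the
   Gorenstein index g gives an integral linear form Phi_k with Phi_k(v_j) = -g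
   for j <> k; evaluated on the relation, it yields Phi_k(v_k) + g = alpha_k.
   Keeping the given vertex order, let U be unimodular bringing
   [v_0 ... v_(d-1)] to Hermite normal form: this is triangularity and (ii).
   The form Phi_k - Phi_d vanishes on every vertex but v_k and v_d and equals
   alpha_k on v_k, so the triangular shape forces a_kk | alpha_k, which is (i).
   Finally alpha_j q_j = g|Q| for all j, so w_j = lcm(A)/alpha_j is
   proportional to q_j and (iii) is the relation sum_j q_j U v_j = 0. *)

From HB Require Import structures.
From mathcomp Require Import all_boot all_order fingroup perm all_algebra.
From mathcomp Require Import zify.
Set Implicit Arguments.
Unset Strict Implicit.
Unset Printing Implicit Defensive.
Import Order.TTheory GRing.Theory Num.Theory.
Local Open Scope ring_scope.

Lemma col_unimodular_reduce n (x : 'cV[int]_(1 + n)) : x != 0 ->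
  exists2 U : 'M[int]_(1 + n), U \in unitmx &
    exists2 c : int, 0 < c & U *m x = col_mx c%:M 0.
Proof.
move=> nzx; have [L uL [R uR [ds _ dM]]] := int_Smith_normal_form x.
pose c := ds`_0 * R 0 0.
have Lx : invmx L *m x = col_mx c%:M 0.
  rewrite dM !mulmxA mulVmx // mul1mx.
  apply/matrixP => i j; rewrite [j]ord1 !mxE big_ord1 !mxE.
  case: (split_ordP i) => i' ->; rewrite ?col_mxEu ?col_mxEd !mxE.
    by rewrite [i']ord1 /= mulr1n.
  by rewrite /= mulr0n mul0r.
have nzc : c != 0.
  apply: contraNneq nzx => c0; rewrite -(mulKVmx uL x) Lx c0.
  have -> : (0 : int)%:M = 0 :> 'M_1.
    by apply/matrixP => i j; rewrite !mxE mul0rn.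
  by rewrite col_mx0 mulmx0.
exists (Num.sg c *: invmx L).
  rewrite unitmxZ ?unitmx_inv //; apply/unitrP; exists (Num.sg c).
  by rewrite -expr2 sqr_sg nzc.
exists `|c|; first by rewrite normr_gt0.
by rewrite -scalemxAl Lx scale_col_mx scaler0 scale_scalar_mx -normrEsg.
Qed.

Lemma row_reduce_mod_triu n (H : 'M[int]_n) (r : 'rV[int]_n) :
  (forall i k : 'I_n, (k < i)%N -> H i k = 0) -> (forall k, 0 < H k k) ->
  exists t : 'rV[int]_n, forall k, 0 <= (r - t *m H) 0 k < H k k.
Proof.
elim: n H r => [|n IH] H r H_triu H_diag; first by exists 0; case.
rewrite -[n.+1]/(1 + n)%N in H r H_triu H_diag *.
pose h := H (lshift n ord0) (lshift n ord0).
pose t0 : int := ((r ord0 (lshift n ord0)) %/ h)%Z.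
pose r' := rsubmx r - t0 *: ursubmx H.
have [||t' Ht'] := IH (drsubmx H) r'.
- by move=> i k ki; rewrite !mxE H_triu.
- by move=> k; rewrite !mxE H_diag.
exists (row_mx t0%:M t') => k.
have Hdl : dlsubmx H = 0.
  by apply/matrixP => i j; rewrite !mxE H_triu //= [j]ord1.
have -> : r - row_mx t0%:M t' *m H =
    row_mx (lsubmx r - t0 *: ulsubmx H) (r' - t' *m drsubmx H).
  rewrite -{1}[H]submxK -{1}[r]hsubmxK mul_row_block Hdl mulmx0 addr0.
  by rewrite opp_row_mx add_row_mx !mul_scalar_mx /r' opprD addrA.
case: (split_ordP k) => k' ->; last first.
  have -> : H (rshift 1 k') (rshift 1 k') = drsubmx H k' k' by rewrite !mxE.
  by rewrite row_mxEr; apply: Ht'.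
rewrite row_mxEl [k']ord1 !mxE -/h.
have hp : 0 < h by apply: H_diag.
have -> : r ord0 (lshift n ord0) - t0 * h = (r ord0 (lshift n ord0) %% h)%Z.
  by rewrite {1}(divz_eq (r ord0 (lshift n ord0)) h) addrC addKr.
by rewrite ltz_pmod // andbT modz_ge0 // gt_eqF.
Qed.

Definition is_hnf {n} (H : 'M[int]_n) :=
  [/\ forall i k : 'I_n, (k < i)%N -> H i k = 0,
      forall k, 0 < H k k &
      forall i k : 'I_n, (i < k)%N -> 0 <= H i k < H k k].

Lemma is_hnf_block n (c : int) (u : 'rV[int]_n) (H : 'M[int]_n) :
  0 < c -> is_hnf H -> (forall k, 0 <= u 0 k < H k k) ->
  is_hnf (block_mx c%:M u 0 H : 'M_(1 + n)).
Proof.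
move=> c_gt0 [H_triu H_diag H_red] u_red; split.
- move=> i k; case: (split_ordP i) => i' ->; case: (split_ordP k) => k' -> /=.
  + by rewrite [i']ord1 [k']ord1.
  + by have := ltn_ord i'; lia.
  + by rewrite block_mxEdl mxE.
  + by rewrite block_mxEdr; apply: H_triu.
- move=> k; case: (split_ordP k) => k' ->.
  + by rewrite block_mxEul [k']ord1 mxE mulr1n.
  + by rewrite block_mxEdr.
- move=> i k; case: (split_ordP i) => i' ->; case: (split_ordP k) => k' -> /=.
  + by rewrite [i']ord1 [k']ord1.
  + by rewrite block_mxEdr block_mxEur [i']ord1.
  + by have := ltn_ord k'; lia.
  + by rewrite !block_mxEdr; apply: H_red.
Qed.

Lemma exists_hnf n (M : 'M[int]_n) : \det M != 0 ->
  exists2 U : 'M[int]_n, U \in unitmx & is_hnf (U *m M).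
Proof.
elim: n M => [|n IH] M dM; first by exists 1; [exact: unitmx1 | split; case].
rewrite -[n.+1]/(1 + n)%N in M dM *.
have nz_col0 : lsubmx M != 0.
  apply: contraNneq dM => x0.
  rewrite (expand_det_col M (lshift n ord0)) big1 // => i _.
  have -> : M i (lshift n ord0) = lsubmx M i ord0 by rewrite mxE.
  by rewrite x0 mxE mul0r.
have [U1 uU1 [c c_gt0 U1M0]] := col_unimodular_reduce nz_col0.
pose Y := U1 *m rsubmx M.
have U1M : U1 *m M = block_mx c%:M (usubmx Y) 0 (dsubmx Y).
  by rewrite -{1}[M]hsubmxK mul_mx_row U1M0 block_mxEh -/Y vsubmxK.
have dY : \det (dsubmx Y) != 0.
  have : \det (U1 *m M) != 0.
    rewrite det_mulmx mulf_neq0 //.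
    by apply: contraTneq uU1 => U1_0; rewrite unitmxE U1_0 unitr0.
  by rewrite U1M det_ublock; apply: contraNneq => ->; rewrite mulr0.
have [U' uU' hnf_H'] := IH _ dY.
have [H_triu H_diag _] := hnf_H'.
have [t Ht] := row_reduce_mod_triu (usubmx Y) H_triu H_diag.
exists (block_mx 1 (- t) 0 1 *m block_mx 1 0 0 U' *m U1).
  rewrite !unitmx_mul uU1 andbT.
  by rewrite !unitmxE !det_ublock !det1 !mul1r unitr1.
rewrite -!mulmxA U1M !mulmx_block !(mul1mx, mul0mx, mulmx0, addr0, add0r).
by rewrite mulNmx; apply: is_hnf_block.
Qed.

Lemma det_ratM n (A : 'M[int]_n) : \det (ratM A) = (\det A)%:~R.
Proof. exact: det_map_mx. Qed.

Lemma col_mx_row1_lift0 m n (R : Type) (A : 'M[R]_(1, n)) (B : 'M[R]_(m, n))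
    i j :
  col_mx A B (lift 0 i) j = B i j.
Proof. by rewrite (_ : lift 0 i = rshift 1 i) ?col_mxEd //; apply: val_inj. Qed.

Lemma col_mx_row1_0 m n (R : Type) (A : 'M[R]_(1, n)) (B : 'M[R]_(m, n)) j :
  col_mx A B 0 j = A 0 j.
Proof.
by rewrite (_ : 0 = lshift m 0 :> 'I_(1 + m)) ?col_mxEu //; apply: val_inj.
Qed.

Definition weight_vec d (V : 'M[int]_(d, d.+1)) : 'cV[int]_d.+1 :=
  \col_j (weight V j)%:Z.

Section Barycentric.

Variables (d : nat) (V : 'M[int]_(d, d.+1)).

Let Vh : 'M[rat]_d.+1 := col_mx (const_mx 1 : 'M_(1, d.+1)) (ratM V).

Lemma adj_homog_col0 j : \adj Vh j 0 = (-1) ^+ j * (\det (col' j V))%:~R.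
Proof.
rewrite mxE /cofactor add0n -det_ratM; congr (_ * \det _).
by apply/matrixP => a b; rewrite mxE [in LHS]mxE col_mx_row1_lift0 !mxE.
Qed.

Variable lam : 'cV[rat]_d.+1.
Hypotheses (lam_sum : \sum_j lam j 0 = 1) (Vlam : ratM V *m lam = 0).

Lemma homog_mul_barycentric : Vh *m lam = delta_mx 0 0.
Proof.
apply/matrixP => i j; rewrite [j]ord1 !mxE.
case: (unliftP 0 i) => [i'|] ->.
  rewrite eq_sym (negPf (neq_lift _ _)) /=.
  transitivity ((ratM V *m lam) i' 0); last by rewrite Vlam mxE.
  by rewrite mxE; apply: eq_bigr => k _; rewrite col_mx_row1_lift0.
rewrite eqxx /= -lam_sum; apply: eq_bigr => k _.
by rewrite col_mx_row1_0 mxE mul1r.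
Qed.

Lemma weight_barycentric j : (weight V j)%:R = `|\det Vh * lam j 0|.
Proof.
have adjE : \adj Vh j 0 = \det Vh * lam j 0.
  have := congr1 (fun X : 'cV_d.+1 => X j 0) (mulmxA (\adj Vh) Vh lam).
  rewrite homog_mul_barycentric mul_adj_mx -colE mxE => ->.
  by rewrite mul_scalar_mx mxE.
have : (\det (col' j V))%:~R = (-1) ^+ j * (\det Vh * lam j 0) :> rat.
  by rewrite -adjE adj_homog_col0 signrMK.
rewrite /weight natr_absz intr_norm => ->.
by rewrite normrM normrX normrN normr1 expr1n mul1r.
Qed.

End Barycentric.

Lemma IP_simplex_weights d (V : 'M[int]_(d, d.+1)) :
  IP_simplex V -> (forall j, 0 < weight V j)%N /\ V *m weight_vec V = 0.
Proof.
case=> rkV [lam [lam_gt0 [lam_sum Vlam]]].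
set Vh := col_mx _ _ in rkV.
have Vh_unit : Vh \in unitmx by rewrite -row_free_unit /row_free rkV.
have detVh_gt0 : 0 < `|\det Vh| by rewrite normr_gt0 -unitfE -unitmxE.
have qE j : (weight V j)%:R = `|\det Vh| * lam j 0.
  by rewrite (weight_barycentric lam_sum Vlam) normrM (gtr0_norm (lam_gt0 j)).
split=> [j|].
  by rewrite -(ltr0n rat) qE mulr_gt0.
apply/matrixP => r i; apply: (@intr_inj rat); rewrite [i]ord1 !mxE rmorph_sum.
transitivity (`|\det Vh| * (ratM V *m lam) r 0).
  rewrite mxE mulr_sumr; apply: eq_bigr => j _.
  by rewrite mxE rmorphM /= -[X in _ * X]/((weight V j)%:R) qE mxE mulrCA.
by rewrite Vlam !mxE mulr0.
Qed.

Lemma int_vec_scale_dvdn d (u : 'cV[rat]_d) (m n : nat) :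
  (m %| n)%N -> int_vec (m%:R *: u) -> int_vec (n%:R *: u).
Proof.
move=> /dvdnP[c ->] mu i; rewrite natrM -scalerA mxE.
exact: rpredM (natr_int _ c) (mu i).
Qed.

Lemma int_vecP d (u : 'cV[rat]_d) :
  int_vec u -> exists z : 'cV[int]_d, u = ratM z.
Proof.
move=> uZ; have /fin_all_exists[z zE] : forall i, exists m : int, u i 0 = m%:~R.
  by move=> i; apply/intrP/uZ.
by exists (\col_i z i); apply/matrixP => i j; rewrite [j]ord1 !mxE zE.
Qed.

Lemma dual_vertex_int_form d (V : 'M[int]_(d, d.+1)) (g gk : nat) k :
  (0 < weight V k)%N -> is_local_gor V k gk -> (gk %| g)%N ->
  exists Phi : 'rV[int]_d, forall j, j != k -> (Phi *m V) 0 j = - g%:Z.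
Proof.
move=> qk_gt0 [_ [gk_int _]] gk_g.
have [z zE] := int_vecP (int_vec_scale_dvdn gk_g gk_int).
pose A := col' k (ratM V).
have A_unit : A^T \in unitmx.
  rewrite unitmx_tr unitmxE unitfE /A -map_col' det_ratM intr_eq0.
  by rewrite -absz_gt0.
have Au : A^T *m dual_vertex V k = const_mx (-1) by rewrite mulKVmx.
exists z^T => j; case: (unliftP k j) => [j'|] ->; last by rewrite eqxx.
move=> _; apply: (@intr_inj rat); rewrite rmorphN /=.
transitivity ((g%:R *: (A^T *m dual_vertex V k)) j' 0); last first.
  by rewrite Au !mxE mulrN1.
rewrite scalemxAr zE !mxE rmorph_sum; apply: eq_bigr => i _.
by rewrite !mxE rmorphM mulrC.
Qed.

Section AlphaFromDualForm.

Variables (d : nat) (V : 'M[int]_(d, d.+1)) (g : nat) (k : 'I_d.+1).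
Variable Phi : 'rV[int]_d.
Hypotheses (Vq : V *m weight_vec V = 0)
  (PhiV : forall j, j != k -> (Phi *m V) 0 j = - g%:Z).

Lemma weight_mul_dual_form :
  (weight V k)%:Z * ((Phi *m V) 0 k + g%:Z) = (g * Qsum V)%N%:Z.
Proof.
set e := (Phi *m V) 0 k.
have : (Phi *m V *m weight_vec V) 0 0 = 0 by rewrite -mulmxA Vq mulmx0 mxE.
rewrite mxE (bigD1 k) //=.
rewrite (eq_bigr (fun j => - g%:Z * (weight V j)%:Z)); last first.
  by move=> j jk; rewrite PhiV // mxE.
rewrite -mulr_sumr [weight_vec _ _ _]mxE -/e => eq0.
rewrite /Qsum (bigD1 k) //= PoszM PoszD (big_morph Posz PoszD (erefl 0%:Z)).
by move: eq0; set s := \sum_(j | j != k) _; nia.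
Qed.

Hypothesis qk_gt0 : (0 < weight V k)%N.

Lemma alpha_dual_form : (alpha V g k)%:Z = (Phi *m V) 0 k + g%:Z.
Proof.
by rewrite /alpha -divz_nat -weight_mul_dual_form mulKz // eqz_nat -lt0n.
Qed.

Lemma alpha_mul_weight : (alpha V g k * weight V k = g * Qsum V)%N.
Proof.
by apply/eqP; rewrite -eqz_nat PoszM alpha_dual_form mulrC weight_mul_dual_form.
Qed.

End AlphaFromDualForm.

Section UpperTriangular.

Variables (R : idomainType) (n : nat) (H : 'M[R]_n).
Hypotheses (H_triu : forall i k : 'I_n, (k < i)%N -> H i k = 0)
  (H_diag : forall k, H k k != 0).

Lemma triu_row_mul_diag (x : 'rV[R]_n) (k : 'I_n) :
  (forall i : 'I_n, (i < k)%N -> x 0 i = 0) -> (x *m H) 0 k = x 0 k * H k k.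
Proof.
move=> x_lt; rewrite mxE (bigD1 k) //= big1 ?addr0 // => i ik.
case: (ltngtP i k) => [ilt|igt|/val_inj ieq]; last by rewrite ieq eqxx in ik.
- by rewrite x_lt ?mul0r.
- by rewrite H_triu ?mulr0.
Qed.

Lemma triu_row_eq0 (x : 'rV[R]_n) (k : 'I_n) :
  (forall j : 'I_n, (j < k)%N -> (x *m H) 0 j = 0) ->
  forall i : 'I_n, (i < k)%N -> x 0 i = 0.
Proof.
move=> xH0; suff IH m (i : 'I_n) : (i < m)%N -> (i < k)%N -> x 0 i = 0.
  by move=> i; apply: (IH i.+1).
elim: m i => [//|m IHm] i im ik.
have : (x *m H) 0 i = 0 by apply: xH0.
rewrite triu_row_mul_diag => [/eqP|j ji]; last by apply: IHm; lia.
by rewrite mulf_eq0 (negPf (H_diag i)) orbF => /eqP.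
Qed.

End UpperTriangular.

Lemma dvdz_triu_unimodular_mul n (U M : 'M[int]_n) (y : 'rV[int]_n) (k : 'I_n) :
  U \in unitmx -> (forall i j : 'I_n, (j < i)%N -> (U *m M) i j = 0) ->
  (forall j, (U *m M) j j != 0) ->
  (forall j : 'I_n, (j < k)%N -> (y *m M) 0 j = 0) ->
  ((U *m M) k k %| (y *m M) ord0 k)%Z.
Proof.
move=> U_unit H_triu H_diag yM0.
have yE : y *m M = (y *m invmx U) *m (U *m M) by rewrite mulmxA mulmxKV.
rewrite yE triu_row_mul_diag //; first exact: dvdz_mull.
apply: (triu_row_eq0 H_triu H_diag) => j jk; rewrite -yE; exact: yM0.
Qed.

Lemma lcm_div_relation n (A q : 'I_n -> nat) (c : nat) (r : 'I_n -> int) :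
  (0 < c)%N -> (forall i, A i * q i = c)%N ->
  \sum_i r i * (q i)%:Z = 0 ->
  \sum_i r i * ((\big[lcmn/1%N]_j A j) %/ A i)%N%:Z = 0.
Proof.
move=> c_gt0 Aq rq0; set L := \big[lcmn/1%N]_j A j.
apply: (@mulIf _ c%:Z); first by rewrite eqz_nat -lt0n.
transitivity (L%:Z * \sum_i r i * (q i)%:Z); last by rewrite rq0 mulr0 mul0r.
rewrite mulr_suml mulr_sumr; apply: eq_bigr => i _.
rewrite -mulrA -PoszM -(Aq i) mulnA divnK; first by rewrite PoszM mulrCA.
exact: (biglcmn_sup i).
Qed.

Lemma triu_row_relation d (P : 'M[int]_(d, d.+1)) (w : 'I_d.+1 -> int)
    (k : 'I_d) :
  (forall i j : 'I_d, (j < i)%N -> P i (widen_ord (leqnSn d) j) = 0) ->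
  \sum_j P k j * w j = 0 ->
  - P k ord_max * w ord_max =
    \sum_(j < d | (k <= j)%N)
      P k (widen_ord (leqnSn d) j) * w (widen_ord (leqnSn d) j).
Proof.
move=> P_triu; rewrite big_ord_recr /= mulNr => /eqP.
rewrite addr_eq0 => /eqP <-.
rewrite (bigID (fun j : 'I_d => (k <= j)%N)) /= [X in _ + X]big1 ?addr0 //.
by move=> j; rewrite -ltnNge => jk; rewrite P_triu ?mul0r.
Qed.

Lemma mulmx_col' (R : pzSemiRingType) m n p (A : 'M[R]_(m, n))
    (B : 'M[R]_(n, p.+1)) j :
  A *m col' j B = col' j (A *m B).
Proof. exact: mulmx_colsub. Qed.

Lemma col'_ord_maxE (R : Type) m n (A : 'M[R]_(m, n.+1)) i j :
  col' ord_max A i j = A i (widen_ord (leqnSn n) j).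
Proof. by rewrite mxE; congr (A i _); apply: val_inj; exact: lift_max. Qed.

Lemma widen_ord_neq_max n (j : 'I_n) : widen_ord (leqnSn n) j != ord_max.
Proof. by rewrite -val_eqE /= neq_ltn ltn_ord. Qed.

Section HermiteReduction.

Variables (d : nat) (V : 'M[int]_(d, d.+1)) (g : nat).
Variable Phi : 'I_d.+1 -> 'rV[int]_d.
Hypotheses (g_gt0 : (0 < g)%N) (q_gt0 : forall k, (0 < weight V k)%N)
  (Vq : V *m weight_vec V = 0)
  (PhiV : forall k j, j != k -> (Phi k *m V) 0 j = - g%:Z).
Variable U : 'M[int]_d.
Hypotheses (U_unit : U \in unitmx) (H_hnf : is_hnf (U *m col' ord_max V)).

Local Notation widen := (widen_ord (leqnSn d)).

Lemma hnf_widenE i j : (U *m V) i (widen j) = (U *m col' ord_max V) i j.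
Proof. by rewrite mulmx_col' col'_ord_maxE. Qed.

Lemma hnf_diag_dvd_alpha k :
  ((U *m V) k (widen k) %| (alpha V g (widen k))%:Z)%Z.
Proof.
have [H_triu H_diag _] := H_hnf.
pose psi := Phi (widen k) - Phi ord_max.
have psiE j : (psi *m col' ord_max V) 0 j =
    (Phi (widen k) *m V) 0 (widen j) - (Phi ord_max *m V) 0 (widen j).
  by rewrite mulmx_col' col'_ord_maxE mulmxBl !mxE.
have -> : (alpha V g (widen k))%:Z = (psi *m col' ord_max V) 0 k.
  rewrite psiE (@PhiV ord_max) ?widen_ord_neq_max // opprK.
  exact: (alpha_dual_form Vq (@PhiV _) (q_gt0 _)).
rewrite hnf_widenE; apply: dvdz_triu_unimodular_mul => // [j|j jk].
  by rewrite gt_eqF.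
rewrite psiE !PhiV ?widen_ord_neq_max ?subrr //.
by rewrite -val_eqE /= ltn_eqF.
Qed.

Lemma hnf_row_lcm_relation k :
  \sum_j (U *m V) k j
    * ((\big[lcmn/1%N]_i alpha V g i) %/ alpha V g j)%N%:Z = 0.
Proof.
apply: (@lcm_div_relation _ _ _ (g * Qsum V)) => [|i|].
- by rewrite muln_gt0 g_gt0 /Qsum (bigD1 ord0) // addn_gt0 q_gt0.
- exact: (alpha_mul_weight Vq (@PhiV i) (q_gt0 i)).
- transitivity ((U *m V *m weight_vec V) k 0).
    by rewrite mxE; apply: eq_bigr => j _; rewrite [weight_vec _ _ _]mxE.
  by rewrite -mulmxA Vq mulmx0 mxE.
Qed.

Lemma hnf_construction_hyps : construction_hyps (alpha V g) (U *m V).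
Proof.
have [H_triu H_diag H_red] := H_hnf.
split; [|split; [|split]].
- by move=> i k ki; rewrite hnf_widenE H_triu.
- move=> k; rewrite hnf_diag_dvd_alpha hnf_widenE.
  by split; first exact: H_diag.
- by move=> i k ik; rewrite !hnf_widenE H_red.
- move=> k; apply: triu_row_relation (hnf_row_lcm_relation k).
  by move=> i j ji; rewrite hnf_widenE H_triu.
Qed.

End HermiteReduction.

Theorem proposition5p2 (d : nat) (V : 'M[int]_(d, d.+1)) (g : nat)
  (gs : 'I_d.+1 -> nat) :
  (2 <= d)%N ->
  IP_simplex V ->
  (forall k, is_local_gor V k (gs k)) ->
  g = (\big[lcmn/1%N]_(k < d.+1) gs k)%N ->
  exists (s : 'S_d.+1) (U : 'M[int]_d) (P : 'M[int]_(d, d.+1)),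
    U \in unitmx /\
    P = U *m col_perm s V /\
    construction_hyps (alpha (col_perm s V) g) P.
Proof.
move=> _ IP_V gor_gs g_lcm.
have [q_gt0 Vq] := IP_simplex_weights IP_V.
have g_gt0 : (0 < g)%N.
  rewrite g_lcm; apply: (big_ind (fun m => 0 < m)%N) => // [x y|k _].
    by rewrite lcmn_gt0 => ->.
  by case: (gor_gs k).
have /fin_all_exists[Phi PhiV] k : exists Phi : 'rV[int]_d,
    forall j, j != k -> (Phi *m V) 0 j = - g%:Z.
  apply: (dual_vertex_int_form (q_gt0 k) (gor_gs k)).
  by rewrite g_lcm (biglcmn_sup k).
have det_neq0 : \det (col' ord_max V) != 0 by rewrite -absz_gt0; apply: q_gt0.
have [U U_unit H_hnf] := exists_hnf det_neq0.
exists 1%g, U, (U *m V); rewrite col_perm1; split=> //; split=> //.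
exact: (hnf_construction_hyps g_gt0 q_gt0 Vq PhiV).
Qed.
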